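(* Fast-track actions are optimal: let $s_t$ be a state in which the current color $p_t\neq 0$, the next upstream car has color $e_{t,1}=p_t$, and some lane $i$ is completely empty. Then the store action that places this car into lane $i$ (action $a=L+i$) is optimal in $s_t$.
   Context: Paint shop problem with a multi-lane buffer: an upstream sequence of cars with colors in $\{1,\dots,C\}$ is processed in order; the buffer has $L$ lanes, each a first-in-first-out queue of capacity $W$, with $B_{t,i,j}\in\{0,\dots,C\}$ the color at position $j$ of lane $i$ at time $t$ (0 = empty, position $W$ is the front/exit of the lane, new cars enter at the rightmost empty position). $e_{t,1}$ is the color of the next upstream car (0 if the upstream sequence is empty), and $p_t\in\{0,\dots,C\}$ is the color of the last car appended to the downstream sequence (0 initially). Actions: $a\in\{1,\dots,L\}$ retrieves the front car of lane $a$ and appends it to the downstream sequence (setting $p_{t+1}=B_{t,a,W}$); $a\in\{L+1,\dots,2L\}$ stores the next upstream car in lane $a-L$ (leaving $p$ unchanged). Reward: $r(s_t,a)=1$ for a valid retrieval with $B_{t,a,W}=p_t$; $0$ for a valid retrieval with $B_{t,a,W}\neq p_t$; $0$ for a valid store; $-10$ for an invalid action (retrieving from an empty lane, storing into a full lane, or storing when the upstream sequence is empty). The cumulative reward of actions $a_1,\dots,a_n$ from state $s_0$ is $r(s_0,a_1,\dots,a_n)=\sum_{t=0}^{n-1} r(s_t,a_{t+1})$, where $s_{t+1}$ results from applying $a_{t+1}$ in $s_t$. An action $a^*$ is optimal in $s_t$ if $\max_{a_1,\dots,a_n}r(s_t,a^*,a_1,\dots,a_n)\ge r(s_t,a',a'_1,\dots,a'_n)$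 for all actions $a',a'_1,\dots,a'_n$. *)

From mathcomp Require Import all_boot.
From Stdlib Require Import ZArith.
Set Implicit Arguments. Unset Strict Implicit. Unset Printing Implicit Defensive.

(* A state of the paint shop with a multi-lane buffer.
   - [buf s] : list of the L lanes; lane number i (1-indexed, as in the paper)
     is [nth [::] (buf s) i.-1]. Each lane is a FIFO queue listed FRONT FIRST:
     its head is the car at the exit position W; the occupied cells are the
     nonzero entries B_{t,i,.} (empty cells are not stored).
   - [ups s] : remaining upstream sequence; e_{t,1} = head 0 (ups s).
   - [cur s] : p_t, colour of the last car appended downstream (0 initially). *)
Record state := mkState { buf : seq (seq nat); ups : seq nat; cur : nat }.

Definition color_ok (C c : nat) : bool := (1 <= c <= C).

Definition wf_state (C L W : nat) (s : state) : Prop :=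
  size (buf s) = L /\
  all (fun lane => size lane <= W) (buf s) /\
  all (fun lane => all (color_ok C) lane) (buf s) /\
  all (color_ok C) (ups s) /\
  cur s <= C.

Definition action_ok (L a : nat) : bool := (1 <= a <= 2 * L).

Definition step (L W : nat) (s : state) (a : nat) : Z * state :=
  if (1 <= a <= L) then
    let i := a.-1 in
    match nth [::] (buf s) i with
    | [::] => ((-10)%Z, s)
    | c :: rest =>
        ((if c == cur s then 1%Z else 0%Z),
         mkState (set_nth [::] (buf s) i rest) (ups s) c)
    end
  else if (L < a <= 2 * L) then
    let i := (a - L).-1 in
    let lane := nth [::] (buf s) i in
    match ups s with
    | [::] => ((-10)%Z, s)
    | e :: ups' =>
        if W <= size lane then ((-10)%Z, s)
        else (0%Z, mkState (set_nth [::] (buf s) i (rcons lane e)) ups' (cur s))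
    end
  else ((-10)%Z, s).

Fixpoint cum_reward (L W : nat) (s : state) (acts : seq nat) : Z :=
  match acts with
  | [::] => 0%Z
  | a :: rest => let (r, s') := step L W s a in (r + cum_reward L W s' rest)%Z
  end.

Definition optimal (L W : nat) (s : state) (astar : nat) : Prop :=
  forall (a' : nat) (rest' : seq nat),
    action_ok L a' -> all (action_ok L) rest' ->
    exists rest : seq nat,
      all (action_ok L) rest /\
      (cum_reward L W s (a' :: rest') <= cum_reward L W s (astar :: rest))%Z.

(* Storing the car into the empty lane and retrieving it at once earns 1 and
   reaches the state [s'] obtained from [s] by deleting that car upstream.
   Every play from [s] is shadowed from [s'] by copying all moves that do not
   touch the deleted car, so the two states stay equal up to that one car.
   When the play from [s] finally retrieves it, either the retrieval pays 1
   and the states coincide, or it pays nothing and the states differ only in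
   their current colour, which changes the remaining reward by at most 1.
   Hence the shadow loses at most 1, which the fast-track move has banked. *)
From mathcomp Require Import all_boot zify.
From Stdlib Require Import ZArith Lia.

Set Implicit Arguments.
Unset Strict Implicit.
Unset Printing Implicit Defensive.

Lemma set_nth_nth (T : Type) (x0 : T) s n :
  n < size s -> set_nth x0 s n (nth x0 s n) = s.
Proof. by move=> ltns; rewrite set_nthE ltns -drop_nth // cat_take_drop. Qed.

Lemma step_retrieve L W s k : k < L ->
  step L W s k.+1 =
  match nth [::] (buf s) k with
  | [::] => ((-10)%Z, s)
  | c :: rest => ((if c == cur s then 1 else 0)%Z,
                  mkState (set_nth [::] (buf s) k rest) (ups s) c)
  end.
Proof. by move=> ltkL; rewrite /step ifT //; lia. Qed.

Lemma step_store L W s k : k < L ->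
  step L W s (L + k.+1) =
  match ups s with
  | [::] => ((-10)%Z, s)
  | e :: u =>
      if W <= size (nth [::] (buf s) k) then ((-10)%Z, s)
      else (0%Z, mkState (set_nth [::] (buf s) k (rcons (nth [::] (buf s) k) e)) u (cur s))
  end.
Proof.
move=> ltkL; rewrite /step ifF; last by lia.
by rewrite ifT; [have -> : (L + k.+1 - L).-1 = k by lia | lia].
Qed.

Variant action_spec (L : nat) : nat -> Prop :=
  | Retrieve k of k < L : action_spec L k.+1
  | Store k of k < L : action_spec L (L + k.+1).

Lemma actionP L a : action_ok L a -> action_spec L a.
Proof.
move=> /andP[a_gt0 a_le2L]; case: (leqP a L) => leaL.
  by rewrite -(prednK a_gt0); constructor; lia.
have -> : a = L + (a - L).-1.+1 by lia.
by constructor; lia.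
Qed.

Lemma cum_reward_cons L W s a acts :
  cum_reward L W s (a :: acts) =
  ((step L W s a).1 + cum_reward L W (step L W s a).2 acts)%Z.
Proof. by rewrite /=; case: step. Qed.

(* Both runs perform the same buffer moves; their colours agree after the
   first retrieval, and only that retrieval's reward can differ. *)
Lemma cum_reward_cur_le L W b u c1 c2 acts :
  (cum_reward L W (mkState b u c1) acts <= 1 + cum_reward L W (mkState b u c2) acts)%Z.
Proof.
elim: acts b u c1 c2 => [|a acts IH] b u c1 c2; first by rewrite /=; lia.
rewrite !cum_reward_cons /step; cbn [buf ups cur].
case: ifP => _.
  case: (nth [::] b a.-1) => [|c rest]; cbn [fst snd]; last by case: eqP; case: eqP; lia.
  by have := IH b u c1 c2; lia.
case: ifP => _; cbn [fst snd]; last by have := IH b u c1 c2; lia.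
case: u => [|e u]; cbn [fst snd]; first by have := IH b [::] c1 c2; lia.
case: ifP => _; cbn [fst snd]; first by have := IH b (e :: u) c1 c2; lia.
by have := IH (set_nth [::] b (a - L).-1 (rcons (nth [::] b (a - L).-1) e)) u c1 c2; lia.
Qed.

Section ExtraCar.

Variables (L W x : nat).

Inductive extra_car : state -> state -> Prop :=
  | ExtraUpstream b u c : size b = L ->
      extra_car (mkState b (x :: u) c) (mkState b u c)
  | ExtraInLane b b' u c j pre post : size b = L ->
      nth [::] b j = pre ++ x :: post -> b' = set_nth [::] b j (pre ++ post) ->
      extra_car (mkState b u c) (mkState b' u c).

Lemma extra_car_set_other_lane b b' u c j pre post k y :
  size b = L -> k < L -> k != j ->
  nth [::] b j = pre ++ x :: post -> b' = set_nth [::] b j (pre ++ post) ->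
  extra_car (mkState (set_nth [::] b k y) u c) (mkState (set_nth [::] b' k y) u c).
Proof.
move=> sizeb ltkL neqkj bj ->; apply: (@ExtraInLane _ _ _ _ j pre post).
- by rewrite size_set_nth sizeb; apply/maxn_idPr.
- by rewrite nth_set_nth /= eq_sym (negbTE neqkj).
- by rewrite set_set_nth eq_sym (negbTE neqkj).
Qed.

Lemma extra_car_set_own_lane b b' u c j pre post pre' post' :
  size b = L -> nth [::] b j = pre ++ x :: post -> b' = set_nth [::] b j (pre ++ post) ->
  extra_car (mkState (set_nth [::] b j (pre' ++ x :: post')) u c)
            (mkState (set_nth [::] b' j (pre' ++ post')) u c).
Proof.
move=> sizeb bj ->; have ltjb : j < size b.
  rewrite ltnNge; apply/negP => /(nth_default [::]).
  by rewrite bj => /(congr1 size); rewrite size_cat addnS.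
apply: (@ExtraInLane _ _ _ _ j pre' post').
- by rewrite size_set_nth -sizeb; apply/maxn_idPr.
- by rewrite nth_set_nth /= eqxx.
- by rewrite set_set_nth eqxx [in RHS]set_set_nth eqxx.
Qed.

(* How [t] answers a move of [s]: by the same move, by idling, or, when [s]
   retrieves the extra car, by nothing at all (the two states then differ only
   in their current colour). *)
Definition step_matched s t a : Prop :=
  [\/ (step L W s a).1 = (step L W t a).1 /\ extra_car (step L W s a).2 (step L W t a).2,
      ((step L W s a).1 <= 0)%Z /\ extra_car (step L W s a).2 t
    | step L W s a = ((if x == cur t then 1 else 0)%Z, mkState (buf t) (ups t) x)].

Lemma extra_upstream_step b u c a : size b = L -> action_ok L a ->
  step_matched (mkState b (x :: u) c) (mkState b u c) a.
Proof.
move=> sizeb /actionP[k ltkL|k ltkL].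
  apply: Or31; rewrite !step_retrieve //; cbn [buf ups cur].
  case: (nth [::] b k) => [|c' rest]; split => //; first exact: ExtraUpstream.
  by apply: ExtraUpstream; rewrite size_set_nth sizeb; apply/maxn_idPr.
apply: Or32; rewrite step_store //; cbn [buf ups cur].
case: ifP => _; split => //; first exact: ExtraUpstream.
apply: (@ExtraInLane _ _ _ _ k (nth [::] b k) [::]).
- by rewrite size_set_nth sizeb; apply/maxn_idPr.
- by rewrite nth_set_nth /= eqxx cats1.
- by rewrite set_set_nth eqxx cats0 set_nth_nth ?sizeb.
Qed.

Lemma extra_in_lane_step b b' u c j pre post a : size b = L ->
  nth [::] b j = pre ++ x :: post -> b' = set_nth [::] b j (pre ++ post) ->
  action_ok L a -> step_matched (mkState b u c) (mkState b' u c) a.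
Proof.
move=> sizeb bj b'E aok; have st : extra_car (mkState b u c) (mkState b' u c).
  exact: ExtraInLane sizeb bj b'E.
have b'k k : nth [::] b' k = if k == j then pre ++ post else nth [::] b k.
  by rewrite b'E nth_set_nth.
rewrite /step_matched; case/actionP: aok => k ltkL.
  rewrite !step_retrieve //; cbn [buf ups cur]; rewrite b'k.
  have [->|neqkj] := eqVneq k j.
    rewrite bj; case: pre bj b'E {b'k st} => [|c' pre] bj b'E; cbn [cat].
      by apply: Or33; rewrite b'E.
    by apply: Or31; split=> //; apply: extra_car_set_own_lane b'E.
  case: (nth [::] b k) => [|c' rest]; apply: Or31; split => //.
  exact: extra_car_set_other_lane b'E.
rewrite !step_store //; cbn [buf ups cur].
case: u st => [|e u] st; first exact: Or31.
case: ifP => [_|/negbT notfull]; first exact: Or32.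
have shorter : size (nth [::] b' k) <= size (nth [::] b k).
  by rewrite b'k; case: eqP => [->|//]; rewrite bj !size_cat leq_add2l leqnSn.
have -> : W <= size (nth [::] b' k) = false by lia.
apply: Or31; split => //; rewrite b'k.
have [->|neqkj] := eqVneq k j; last exact: extra_car_set_other_lane b'E.
by rewrite bj !rcons_cat rcons_cons; apply: extra_car_set_own_lane b'E.
Qed.

Lemma extra_car_step s t a :
  extra_car s t -> action_ok L a -> step_matched s t a.
Proof.
case=> [b u c sizeb|b b' u c j pre post sizeb bj b'E]; first exact: extra_upstream_step.
exact: extra_in_lane_step bj b'E.
Qed.

Lemma extra_car_cum_reward s t acts :
  extra_car s t -> all (action_ok L) acts ->
  exists2 acts', all (action_ok L) acts' &
    (cum_reward L W s acts <= 1 + cum_reward L W t acts')%Z.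
Proof.
elim: acts s t => [|a acts IH] s t st; first by exists [::] => //=; lia.
case/andP=> aok acts_ok; rewrite cum_reward_cons.
case: (extra_car_step st aok) => [[same st']|[idle st']|retrieved].
- have [acts' ok' le'] := IH _ _ st' acts_ok.
  by exists (a :: acts'); [rewrite /= aok | rewrite cum_reward_cons same; lia].
- have [acts' ok' le'] := IH _ _ st' acts_ok.
  by exists acts' => //; lia.
- exists acts => //; rewrite retrieved; case: t {st retrieved} => b u c.
  cbn [fst snd buf ups cur]; case: eqP => [->|_]; first by lia.
  by have := @cum_reward_cur_le L W b u x c acts; lia.
Qed.

End ExtraCar.

Lemma store_retrieve_empty_lane L W b e u c k acts :
  0 < W -> size b = L -> k < L -> nth [::] b k = [::] ->
  cum_reward L W (mkState b (e :: u) c) (L + k.+1 :: k.+1 :: acts) =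
  ((if e == c then 1 else 0) + cum_reward L W (mkState b u e) acts)%Z.
Proof.
move=> W_gt0 sizeb ltkL bk.
rewrite !cum_reward_cons step_store //; cbn [buf ups cur]; rewrite bk.
rewrite ifF; last by rewrite leqNgt W_gt0.
cbn [fst snd]; rewrite step_retrieve //; cbn [buf ups cur].
rewrite nth_set_nth /= eqxx set_set_nth eqxx -[X in set_nth _ _ _ X]bk set_nth_nth ?sizeb //=.
Qed.

Theorem corollary1 (C L W : nat) (s : state) (i : nat) :
  0 < W ->
  wf_state C L W s ->
  cur s != 0 ->
  head 0 (ups s) = cur s ->
  1 <= i <= L ->
  nth [::] (buf s) i.-1 = [::] ->
  optimal L W s (L + i).
Proof.
case: s => b u c W_gt0 [sizeb _]; rewrite /= in sizeb *.
move=> c_neq0 head_u /andP[i_gt0 i_leL] bi a' rest' a'_ok rest'_ok.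
case: u head_u => [|e u] e_c; first by rewrite -e_c in c_neq0.
rewrite /= in e_c; subst e.
have ok : all (action_ok L) (a' :: rest') by rewrite /= a'_ok.
have [acts acts_ok le_acts] := extra_car_cum_reward W (ExtraUpstream c u c sizeb) ok.
exists (i :: acts); split; first by rewrite /= acts_ok andbT /action_ok; lia.
rewrite -(prednK i_gt0) store_retrieve_empty_lane //; last by lia.
by rewrite eqxx; lia.
Qed.
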